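(* Let $K>0$ and let $\psi$ be a PTL formula over $\Sigma$ with operator depth $\mathrm{od}(\psi)\le K$. Then for all $u,v,s,t\in\Sigma^*$: $u(st)^Ksv\models\psi$ if and only if $u(st)^Kv\models\psi$.
   Context: PTL formulas over a finite alphabet $\Sigma$ are built from $\pi_a$ ($a\in\Sigma$), $\wedge$, $\neg$ and $\mathbf{P}$; for $w=w_1\cdots w_N$ and $n\in\{1,\dots,N+1\}$: $w,n\models\pi_a$ iff $n\le N$ and $w_n=a$; Boolean connectives as usual; $w,n\models\mathbf{P}\psi$ iff $w,m\models\psi$ for some $1\le m<n$. $w\models\psi$ means $w,|w|+1\models\psi$. The operator depth is defined by $\mathrm{od}(\pi_a)=0$, $\mathrm{od}(\psi_1\wedge\psi_2)=\max(\mathrm{od}(\psi_1),\mathrm{od}(\psi_2))$, $\mathrm{od}(\neg\psi)=\mathrm{od}(\psi)$, $\mathrm{od}(\mathbf{P}\psi)=\mathrm{od}(\psi)+1$. $(st)^K$ denotes the $K$-fold concatenation of $st$. *)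

From mathcomp Require Import all_boot.
Set Implicit Arguments. Unset Strict Implicit. Unset Printing Implicit Defensive.

Inductive ptl (Sigma : finType) : Type :=
| PiA : Sigma -> ptl Sigma
| AndF : ptl Sigma -> ptl Sigma -> ptl Sigma
| NotF : ptl Sigma -> ptl Sigma
| PastF : ptl Sigma -> ptl Sigma.

Fixpoint od (Sigma : finType) (f : ptl Sigma) : nat :=
  match f with
  | PiA _ => 0
  | AndF f1 f2 => maxn (od f1) (od f2)
  | NotF f1 => od f1
  | PastF f1 => (od f1).+1
  end.

(* Satisfaction w, n |= f, with positions 1-indexed, n in {1,...,|w|+1};
   letter w_n is nth (n-1) of w. *)
Fixpoint sat (Sigma : finType) (w : seq Sigma) (n : nat) (f : ptl Sigma) : Prop :=
  match f with
  | PiA a => n <= size w /\ exists x0, nth x0 w n.-1 = a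
  | AndF f1 f2 => sat w n f1 /\ sat w n f2
  | NotF f1 => ~ sat w n f1
  | PastF f1 => exists m, 1 <= m < n /\ sat w m f1
  end.

Definition models (Sigma : finType) (w : seq Sigma) (f : ptl Sigma) : Prop :=
  sat w (size w).+1 f.

Definition pow_seq (T : Type) (s : seq T) (K : nat) : seq T :=
  flatten (nseq K s).

From mathcomp Require Import all_boot.
From Corelib Require Import Setoid.
Set Implicit Arguments. Unset Strict Implicit. Unset Printing Implicit Defensive.

(* An Ehrenfeucht-Fraisse game for the past modality.  Two words are
   k-equivalent when every letter position of one can be answered by a
   position carrying the same letter in the other, the prefixes before the two
   positions being (k-1)-equivalent.  A formula of depth at most k, evaluated
   just after k-equivalent prefixes, cannot tell them apart.  The equivalence
   is a congruence for concatenation, and w^n r is k-equivalent to w^n when r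
   is a prefix of w and k <= n: a position inside the extra copy of r is
   answered by the same position one period earlier, which leaves w^n p and
   w^(n-1) p to compare in the remaining k-1 rounds. *)

Section Words.
Variable T : Type.
Implicit Types u v w x y r : seq T.

Lemma cat_eq_cat_cons x y x1 a x2 :
  x ++ y = x1 ++ a :: x2 ->
  (exists p, x1 = x ++ p /\ y = p ++ a :: x2) \/ (exists q, x = x1 ++ a :: q).
Proof.
elim: x x1 => [|b x IH] x1 /=; first by move=> E; left; exists x1.
case: x1 => [|c x1] /=; first by case=> -> _; right; exists x.
case=> -> /IH [[p [-> ->]]|[q ->]]; first by left; exists p.
by right; exists q.
Qed.

Lemma pow_seqS w n : pow_seq w n.+1 = w ++ pow_seq w n.
Proof. by []. Qed.

Lemma pow_seqSr w n : pow_seq w n.+1 = pow_seq w n ++ w.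
Proof.
elim: n => [|n IH]; first by rewrite /pow_seq /= cats0.
by rewrite [LHS]pow_seqS [in LHS]IH catA.
Qed.

Lemma pow_seqD w i j : pow_seq w (i + j) = pow_seq w i ++ pow_seq w j.
Proof. by elim: i => [|i IH] //; rewrite addSn !pow_seqS IH catA. Qed.

Lemma pow_seq_cat_eq_cons w n r r0 x1 a x2 :
  w = r ++ r0 -> pow_seq w n ++ r = x1 ++ a :: x2 ->
  exists i r1 r2, x1 = pow_seq w i ++ r1 /\ w = r1 ++ a :: r2.
Proof.
move=> Ew; elim: n x1 => [|n IH] x1.
  by move=> /= E; exists 0, x1, (x2 ++ r0); rewrite Ew E -catA.
rewrite pow_seqS -catA => /cat_eq_cat_cons [[p [-> /IH]]|[q Eq]].
  by move=> [i [r1 [r2 [-> Ew1]]]]; exists i.+1, r1, r2; rewrite pow_seqS catA.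
by exists 0, x1, q.
Qed.

Lemma pow_seq_cat_cons r w j m r1 a r2 :
  j < m -> w = r1 ++ a :: r2 ->
  exists y2, pow_seq w m ++ r = (pow_seq w j ++ r1) ++ a :: y2.
Proof.
move=> jm ->; exists (r2 ++ pow_seq (r1 ++ a :: r2) (m - j.+1) ++ r).
by rewrite -{1}(subnKC jm) addSnnS pow_seqD pow_seqS -!catA.
Qed.

Definition forth (R : seq T -> seq T -> Prop) x y :=
  forall x1 a x2, x = x1 ++ a :: x2 ->
  exists y1 y2, y = y1 ++ a :: y2 /\ R x1 y1.

Fixpoint past_equiv k x y : Prop :=
  if k is k'.+1 then forth (past_equiv k') x y /\ forth (past_equiv k') y x
  else True.

Lemma past_equiv_sym k x y : past_equiv k x y -> past_equiv k y x.
Proof. by case: k => //= k []. Qed.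

Lemma past_equiv_refl k x : past_equiv k x x.
Proof. by elim: k x => //= k IH x; split=> x1 a x2 ->; exists x1, x2. Qed.

Lemma past_equiv_mono k x y : past_equiv k.+1 x y -> past_equiv k x y.
Proof.
elim: k x y => [//|k IH] x y [Hf Hb].
by split=> x1 a x2 E; [case: (Hf _ _ _ E) | case: (Hb _ _ _ E)]
  => y1 [y2 [-> /IH]]; exists y1, y2.
Qed.

Lemma past_equiv_catr k x y v : past_equiv k x y -> past_equiv k (x ++ v) (y ++ v).
Proof.
elim: k x y v => [//|k IH] x y v Exy.
have forth_catr x' y' : past_equiv k.+1 x' y' -> forth (past_equiv k) (x' ++ v) (y' ++ v).
  move=> Exy' x1 a x2 /cat_eq_cat_cons [[p [-> ->]]|[q /Exy'.1 [y1 [y2 [-> E1]]]]].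
    by exists (y' ++ p), x2; rewrite catA; split=> //; apply/IH/past_equiv_mono.
  by exists y1, (y2 ++ v); rewrite -catA.
by split; apply: forth_catr => //; apply: past_equiv_sym.
Qed.

Lemma past_equiv_catl k u x y : past_equiv k x y -> past_equiv k (u ++ x) (u ++ y).
Proof.
elim: k x y => [//|k IH] x y Exy.
have forth_catl x' y' : past_equiv k.+1 x' y' -> forth (past_equiv k) (u ++ x') (u ++ y').
  move=> Exy' x1 a x2 /cat_eq_cat_cons [[p [-> /Exy'.1 [y1 [y2 [-> E1]]]]]|[q ->]].
    by exists (u ++ y1), y2; rewrite catA; split=> //; apply: IH.
  by exists x1, (q ++ y'); rewrite -catA; split=> //; apply: past_equiv_refl.
by split; apply: forth_catl => //; apply: past_equiv_sym.
Qed.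

Lemma past_equiv_pow w k n m r r0 :
  w = r ++ r0 -> k <= n -> k <= m ->
  past_equiv k (pow_seq w n ++ r) (pow_seq w m ++ r).
Proof.
elim: k n m r r0 => [//|k IH] n m r r0 Ew.
have forth_pow n' m' : k < n' -> k < m' ->
    forth (past_equiv k) (pow_seq w n' ++ r) (pow_seq w m' ++ r).
  move=> kn km x1 a x2 /(pow_seq_cat_eq_cons Ew) [i [r1 [r2 [-> Ew1]]]].
  have [ki|ik] := leqP k i.
    have [y2 ->] := pow_seq_cat_cons r km Ew1.
    by exists (pow_seq w k ++ r1), y2; split=> //; apply: IH Ew1 ki _.
  have [y2 ->] := pow_seq_cat_cons r (ltn_trans ik km) Ew1.
  by exists (pow_seq w i ++ r1), y2; split=> //; apply: past_equiv_refl.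
by move=> kn km; split; apply: forth_pow.
Qed.

Lemma past_equiv_pow_cat_prefix w k n r r0 :
  w = r ++ r0 -> k <= n -> past_equiv k (pow_seq w n ++ r) (pow_seq w n).
Proof.
case: k => [//|k] Ew; case: n => [//|n] kn; split.
  move=> x1 a x2 /cat_eq_cat_cons [[p [-> Er]]|[q ->]].
    exists (pow_seq w n ++ p), (x2 ++ r0); split.
      by rewrite pow_seqSr [in RHS in _ ++ RHS]Ew Er -!catA.
    by apply: (past_equiv_pow (r0 := a :: x2 ++ r0)) (ltnW kn) kn; rewrite Ew Er -catA.
  by exists x1, q; split=> //; apply: past_equiv_refl.
move=> y1 a y2 ->; exists y1, (y2 ++ r); rewrite -catA.
by split=> //; apply: past_equiv_refl.
Qed.

End Words.

Section Satisfaction.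
Variable Sigma : finType.
Implicit Types (f : ptl Sigma) (x y z : seq Sigma).

Lemma sat_PiA_cat x z a : sat (x ++ z) (size x).+1 (PiA a) <-> ohead z = Some a.
Proof.
have nthE (x0 : Sigma) : nth x0 (x ++ z) (size x) = nth x0 z 0 by rewrite nth_cat ltnn subnn.
rewrite /= size_cat; case: z nthE => [|b z] /= nthE.
  by rewrite addn0 ltnn; split=> [[]|].
split=> [[_ [x0]]|[<-]]; first by rewrite nthE => ->.
by rewrite addnS ltnS leq_addr; split=> //; exists b; rewrite nthE.
Qed.

Lemma sat_PastF_cat x z f :
  sat (x ++ z) (size x).+1 (PastF f) <->
  exists x1 a x2, x = x1 ++ a :: x2 /\ sat (x1 ++ a :: x2 ++ z) (size x1).+1 f.
Proof.
split=> [[[|i] [/= lt_i Hi]]|[x1 [a [x2 [-> Hs]]]]] //.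
  case: x lt_i Hi => [//|x0 x']; rewrite ltnS => lt_i Hi.
  exists (take i (x0 :: x')), (nth x0 (x0 :: x') i), (drop i.+1 (x0 :: x')).
  by rewrite -cat_cons catA -drop_nth // cat_take_drop size_take lt_i.
exists (size x1).+1; rewrite size_cat /= addnS !ltnS leq_addr -catA.
by split.
Qed.

Lemma sat_past_equiv f k x y z1 z2 :
  past_equiv k x y -> od f <= k -> ohead z1 = ohead z2 ->
  sat (x ++ z1) (size x).+1 f <-> sat (y ++ z2) (size y).+1 f.
Proof.
elim: f k x y z1 z2 => [a|f1 IH1 f2 IH2|f IH|f IH] k x y z1 z2 Exy.
- by move=> _ Ez; rewrite !sat_PiA_cat Ez.
- rewrite /= geq_max => /andP [od1 od2] Ez.
  by rewrite (IH1 _ _ _ _ _ Exy od1 Ez) (IH2 _ _ _ _ _ Exy od2 Ez).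
- by move=> /= odf Ez; rewrite (IH _ _ _ _ _ Exy odf Ez).
case: k Exy => [//|k] Exy; rewrite /= ltnS => odf _.
have forth_sat x' y' z1' z2' : past_equiv k.+1 x' y' ->
    sat (x' ++ z1') (size x').+1 (PastF f) -> sat (y' ++ z2') (size y').+1 (PastF f).
  move=> [Hf _] /sat_PastF_cat [x1 [a [x2 [/Hf [y1 [y2 [-> E1]]] Hs]]]].
  apply/sat_PastF_cat; exists y1, a, y2; split=> //.
  by apply: (IH _ _ _ _ _ E1 odf _).1 Hs.
by split; apply: forth_sat => //; apply: past_equiv_sym.
Qed.

Lemma models_past_equiv f k x y :
  past_equiv k x y -> od f <= k -> models x f <-> models y f.
Proof.
move=> Exy odf; have := sat_past_equiv Exy odf (z1 := [::]) (z2 := [::]) erefl.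
by rewrite !cats0.
Qed.

End Satisfaction.

Theorem mainTheorem11 (Sigma : finType) (K : nat) (psi : ptl Sigma)
  (u v s t : seq Sigma) :
  0 < K -> od psi <= K ->
  (models (u ++ pow_seq (s ++ t) K ++ s ++ v) psi <->
   models (u ++ pow_seq (s ++ t) K ++ v) psi).
Proof.
move=> _ od_psi; apply: models_past_equiv od_psi.
rewrite (catA (pow_seq _ K)); apply/past_equiv_catl/past_equiv_catr.
exact: (past_equiv_pow_cat_prefix (r0 := t)).
Qed.
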